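(* In the setting of the context, assume in addition that $V_f$, all $V_{g_i}$ and all $V_{h_j}$ are convex. Let $\bar x\in\mathbb{R}^n$ and $\bar\sigma=(\bar\lambda,\bar\mu,\bar\sigma_f,\bar\sigma_g,\bar\sigma_h)$ satisfy the critical-point conditions (i) $\nabla_x\Xi_1(\bar x,\bar\sigma)=0$; (ii) $\Lambda_f(\bar x)=\nabla V_f^*(\bar\sigma_f)$, $\Lambda_{g_i}(\bar x)=\nabla V_{g_i}^*(\bar\sigma_{g_i})$ for all $i$, $\Lambda_{h_j}(\bar x)=\nabla V_{h_j}^*(\bar\sigma_{h_j})$ for all $j$; (iii) $h(\bar x)=0$, $\bar\lambda\ge0$, $g(\bar x)\le0$, $\bar\lambda^Tg(\bar x)=0$. Suppose $\bar\sigma\in\mathcal S_a^+$ and $\mathcal S_a^+$ is convex. Then $\bar\sigma$ is a global maximizer of $P^d$ on $\mathcal S_a^+$, $\bar x$ is a global minimizer of $f$ on $\mathcal X_a$, and $$f(\bar x)=\min_{x\in\mathcal X_a}f(x)=\max_{\sigma\in\mathcal S_a^+}P^d(\sigma)=P^d(\bar\sigma).$$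
   Context: Problem: minimize $f(x)$ subject to $g_i(x)\le0$ ($i=1,\dots,m$), $h_j(x)=0$ ($j=1,\dots,p$); $g=(g_1,\dots,g_m)$, $h=(h_1,\dots,h_p)$, feasible set $\mathcal X_a=\{x\in\mathbb{R}^n: g(x)\le0,\ h(x)=0\}$. Structural assumption: $f(x)=V_f(\Lambda_f(x))+\tfrac12x^TAx-c^Tx$ with $A$ symmetric, $c\in\mathbb{R}^n$; $g_i(x)=V_{g_i}(\Lambda_{g_i}(x))$; $h_j(x)=V_{h_j}(\Lambda_{h_j}(x))$, where $\Lambda_f:\mathbb{R}^n\to\mathbb{R}^{k_f}$, $\Lambda_{g_i}:\mathbb{R}^n\to\mathbb{R}^{k_i}$, $\Lambda_{h_j}:\mathbb{R}^n\to\mathbb{R}^{l_j}$ are quadratic maps (components are polynomials of degree at most 2). Each $V\in\{V_f,V_{g_i},V_{h_j}\}$ is a ''canonical function'': differentiable on an open set $E\subseteq\mathbb{R}^k$ containing the image of the corresponding $\Lambda$, with $\nabla V:E\to E^*$ a bijection onto an open set $E^*$, and Legendre conjugate $V^*:E^*\to\mathbb{R}$, $V^*(\sigma)=\sigma^T\xi-V(\xi)$, $\xi=(\nabla V)^{-1}(\sigma)$, differentiable with $\nabla V^*=(\nabla V)^{-1}$. Total complementarity function: for $\sigma=(\lambda,\mu,\sigma_f,\sigma_g,\sigma_h)$ with $\lambda\in\mathbb{R}^m$, $\mu\in\mathbb{R}^p$, $\sigma_f\in E_f^*$, $\sigma_{g_i}\in E_{g_i}^*$, $\sigma_{h_j}\in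 E_{h_j}^*$, $$\Xi_1(x,\sigma)=\Lambda_f(x)^T\sigma_f-V_f^*(\sigma_f)+\sum_i\lambda_i\big[\Lambda_{g_i}(x)^T\sigma_{g_i}-V_{g_i}^*(\sigma_{g_i})\big]+\sum_j\mu_j\big[\Lambda_{h_j}(x)^T\sigma_{h_j}-V_{h_j}^*(\sigma_{h_j})\big]+\tfrac12x^TAx-c^Tx.$$ $G(\sigma)=\nabla_x^2\Xi_1(x,\sigma)$ (independent of $x$). $P^d(\sigma)$ is the value of $\Xi_1(\cdot,\sigma)$ at any of its stationary points in $x$ (equivalently $U^\Lambda(\sigma)-V_f^*(\sigma_f)-\sum_i\lambda_iV_{g_i}^*(\sigma_{g_i})-\sum_j\mu_jV_{h_j}^*(\sigma_{h_j})$, where $U^\Lambda(\sigma)$ is the stationary value in $x$ of $\Lambda_f(x)^T\sigma_f+\sum_i\lambda_i\Lambda_{g_i}(x)^T\sigma_{g_i}+\sum_j\mu_j\Lambda_{h_j}(x)^T\sigma_{h_j}+\tfrac12x^TAx-c^Tx$). Dual feasible space $\mathcal S_a$: the set of such $\sigma$ with $\lambda_i\ge0$ for all $i$, $\mu_j\neq0$ for all $j$, and for which $\Xi_1(\cdot,\sigma)$ has a stationary point. Define $\mathcal S_a^+=\{\sigma\in\mathcal S_a: G(\sigma)\succ0,\ \mu_j>0\ \forall j=1,\dots,p\}$. *)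

From mathcomp Require Import ssreflect ssrfun ssrbool eqtype ssrnat seq fintype bigop.
From Stdlib Require Import Reals ClassicalEpsilon.
Set Implicit Arguments. Unset Strict Implicit. Unset Printing Implicit Defensive.
Local Open Scope R_scope.

Definition Vec (k : nat) := 'I_k -> R.
Definition Mat (k : nat) := 'I_k -> 'I_k -> R.

Definition rsum {k : nat} (F : 'I_k -> R) : R := \big[Rplus/R0]_(i < k) F i.
Definition dot {k : nat} (u v : Vec k) : R := rsum (fun i => u i * v i).
Definition vnorm {k : nat} (u : Vec k) : R := sqrt (dot u u).
Definition vsub {k : nat} (u v : Vec k) : Vec k := fun i => u i - v i.
Definition vzero (k : nat) : Vec k := fun _ => 0.
Arguments vzero k : clear implicits.
Definition vcomb {k : nat} (t : R) (u v : Vec k) : Vec k :=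
  fun i => (1 - t) * u i + t * v i.
Definition mxv {k : nat} (M : Mat k) (x : Vec k) : Vec k :=
  fun r => rsum (fun s => M r s * x s).
Definition quadform {k : nat} (M : Mat k) (x : Vec k) : R := dot x (mxv M x).

Definition mx_symmetric {k : nat} (M : Mat k) : Prop := forall r s, M r s = M s r.
Definition posdef {k : nat} (M : Mat k) : Prop :=
  forall v : Vec k, v <> vzero k -> 0 < quadform M v.

Definition has_grad_at {k : nat} (F : Vec k -> R) (x g : Vec k) : Prop :=
  forall eps, 0 < eps -> exists delta, 0 < delta /\
    forall y, vnorm (vsub y x) < delta ->
      Rabs (F y - F x - dot g (vsub y x)) <= eps * vnorm (vsub y x).

Definition is_hessian {k : nat} (F : Vec k -> R) (H : Mat k) : Prop :=
  exists gr : Vec k -> Vec k,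
    (forall x, has_grad_at F x (gr x)) /\
    (forall x r, has_grad_at (fun y => gr y r) x (fun s => H r s)).

Definition is_open {k : nat} (S : Vec k -> Prop) : Prop :=
  forall x, S x -> exists r, 0 < r /\ forall y, vnorm (vsub y x) < r -> S y.

Definition convex_on {k : nat} (S : Vec k -> Prop) (V : Vec k -> R) : Prop :=
  forall x y t, S x -> S y -> 0 <= t <= 1 ->
    S (vcomb t x y) /\ V (vcomb t x y) <= (1 - t) * V x + t * V y.

Definition is_quadratic {n k : nat} (L : Vec n -> Vec k) : Prop :=
  exists (Q : 'I_k -> Mat n) (b : 'I_k -> Vec n) (c0 : Vec k),
    forall x r, L x r = quadform (Q r) x + dot (b r) x + c0 r.

(* A "component" V(Lambda(x)) of the problem, with canonical-function data:
   V on E, gV = grad V, Vs = V^*, gVs = grad V^* = (grad V)^{-1} on Es. *)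
Record probcomp (n : nat) := Comp {
  cdim : nat;
  cLam : Vec n -> Vec cdim;
  cE : Vec cdim -> Prop;
  cEs : Vec cdim -> Prop;
  cV : Vec cdim -> R;
  cgV : Vec cdim -> Vec cdim;
  cVs : Vec cdim -> R;
  cgVs : Vec cdim -> Vec cdim }.
Arguments cdim {n} p.
Arguments cLam {n} p _ _.
Arguments cE {n} p _.
Arguments cEs {n} p _.
Arguments cV {n} p _.
Arguments cgV {n} p _ _.
Arguments cVs {n} p _.
Arguments cgVs {n} p _ _.

Definition canonical_comp {n : nat} (c : probcomp n) : Prop :=
  is_quadratic (cLam c) /\
  is_open (cE c) /\ is_open (cEs c) /\
  (forall x, cE c (cLam c x)) /\
  (forall xi, cE c xi -> has_grad_at (cV c) xi (cgV c xi)) /\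
  (forall xi, cE c xi -> cEs c (cgV c xi) /\ cgVs c (cgV c xi) = xi) /\
  (forall s, cEs c s -> cE c (cgVs c s) /\ cgV c (cgVs c s) = s) /\
  (forall s, cEs c s -> cVs c s = dot s (cgVs c s) - cV c (cgVs c s)) /\
  (forall s, cEs c s -> has_grad_at (cVs c) s (cgVs c s)).

Section Problem.
Variables (n m p : nat) (F : probcomp n) (Gs : 'I_m -> probcomp n) (Hs : 'I_p -> probcomp n)
          (A : Mat n) (c : Vec n).

Definition fobj (x : Vec n) : R :=
  cV F (cLam F x) + / 2 * quadform A x - dot c x.
Definition gcon (i : 'I_m) (x : Vec n) : R := cV (Gs i) (cLam (Gs i) x).
Definition hcon (j : 'I_p) (x : Vec n) : R := cV (Hs j) (cLam (Hs j) x).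

Definition feasible (x : Vec n) : Prop :=
  (forall i, gcon i x <= 0) /\ (forall j, hcon j x = 0).

Record dual := Dual {
  dlam : 'I_m -> R;
  dmu : 'I_p -> R;
  dsf : Vec (cdim F);
  dsg : forall i : 'I_m, Vec (cdim (Gs i));
  dsh : forall j : 'I_p, Vec (cdim (Hs j)) }.
Arguments dsg d i _ : clear implicits.
Arguments dsh d j _ : clear implicits.

Definition dual_comb (t : R) (s1 s2 : dual) : dual :=
  Dual (fun i => (1 - t) * dlam s1 i + t * dlam s2 i)
       (fun j => (1 - t) * dmu s1 j + t * dmu s2 j)
       (vcomb t (dsf s1) (dsf s2))
       (fun i => vcomb t (dsg s1 i) (dsg s2 i))
       (fun j => vcomb t (dsh s1 j) (dsh s2 j)).

Definition Xi1 (x : Vec n) (s : dual) : R :=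
  dot (cLam F x) (dsf s) - cVs F (dsf s)
  + rsum (fun i => dlam s i * (dot (cLam (Gs i) x) (dsg s i) - cVs (Gs i) (dsg s i)))
  + rsum (fun j => dmu s j * (dot (cLam (Hs j) x) (dsh s j) - cVs (Hs j) (dsh s j)))
  + / 2 * quadform A x - dot c x.

Definition stationary (s : dual) (x : Vec n) : Prop :=
  has_grad_at (fun y => Xi1 y s) x (vzero n).

Definition G_posdef (s : dual) : Prop :=
  exists H : Mat n, is_hessian (fun y => Xi1 y s) H /\ posdef H.

Definition stat_pt (s : dual) : Vec n :=
  epsilon (inhabits (vzero n)) (stationary s).
Definition Pd (s : dual) : R := Xi1 (stat_pt s) s.

Definition in_Sa (s : dual) : Prop :=
  (forall i, 0 <= dlam s i) /\ (forall j, dmu s j <> 0) /\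
  cEs F (dsf s) /\ (forall i, cEs (Gs i) (dsg s i)) /\
  (forall j, cEs (Hs j) (dsh s j)) /\
  (exists x, stationary s x).

Definition in_Sa_plus (s : dual) : Prop :=
  in_Sa s /\ G_posdef s /\ (forall j, 0 < dmu s j).

Definition Sa_plus_convex : Prop :=
  forall s1 s2 t, in_Sa_plus s1 -> in_Sa_plus s2 -> 0 <= t <= 1 ->
    in_Sa_plus (dual_comb t s1 s2).

End Problem.
Arguments dsg {n m p F Gs Hs} d i _.
Arguments dsh {n m p F Gs Hs} d j _.

From mathcomp Require Import ssreflect ssrfun ssrbool eqtype ssrnat seq fintype bigop.
From Stdlib Require Import Reals Lra Psatz FunctionalExtensionality ClassicalEpsilon Classical.
From HB Require Import structures.
Set Implicit Arguments. Unset Strict Implicit.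
Local Open Scope R_scope.

(* The proof has three ingredients:
   (a) Fenchel-Young: for a convex canonical function, Lam^T s - V^*(s)
       <= V(Lam), with equality when Lam = grad V^*(s).  Summed with
       multipliers lambda >= 0, mu > 0 this gives WEAK DUALITY:
       Xi1(x, s) <= f(x) for every feasible x and every s in S_a^+.
   (b) If the x-Hessian of Xi1(., s) is positive definite, any stationary
       point is a global minimizer, so P^d(s) = min_x Xi1(x, s).
   (c) At the critical pair (xb, sb) Fenchel-Young is an equality and the
       complementarity conditions kill the constraint terms, so
       Xi1(xb, sb) = f(xb), and by (b) this is also P^d(sb).
   Chaining: P^d(s) <= Xi1(xb, s) <= f(xb) = P^d(sb) and
   f(xb) = P^d(sb) <= Xi1(x, sb) <= f(x) for feasible x. *)

Lemma Rplus_assoc_law : associative Rplus.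
Proof. by move=> x y z; rewrite Rplus_assoc. Qed.
Lemma Rplus_comm_law : commutative Rplus.
Proof. move=> x y; exact: Rplus_comm. Qed.
Lemma Rplus_0_law : left_id R0 Rplus.
Proof. move=> x; exact: Rplus_0_l. Qed.
HB.instance Definition _ :=
  Monoid.isComLaw.Build R R0 Rplus Rplus_assoc_law Rplus_comm_law Rplus_0_law.

Lemma rsum_ext k (f g : 'I_k -> R) : (forall i, f i = g i) -> rsum f = rsum g.
Proof. by move=> H; apply: eq_bigr => i _; apply: H. Qed.

Lemma rsum_plus k (f g : 'I_k -> R) : rsum (fun i => f i + g i) = rsum f + rsum g.
Proof. exact: big_split. Qed.

Lemma rsum_scal k (a : R) (f : 'I_k -> R) : rsum (fun i => a * f i) = a * rsum f.
Proof.
apply: (big_ind2 (fun x y => x = a * y)) => [|x1 y1 x2 y2 -> ->|i _] //; ring.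
Qed.

Lemma rsum_le k (f g : 'I_k -> R) : (forall i, f i <= g i) -> rsum f <= rsum g.
Proof.
move=> H; apply: (big_ind2 (fun x y => x <= y)) => [|x1 y1 x2 y2|i _]; try lra.
exact: H.
Qed.

Lemma rsum_zero k : rsum (fun _ : 'I_k => 0) = 0.
Proof. exact: big1. Qed.

Lemma rsum_deriv k (f : 'I_k -> R -> R) (f' : 'I_k -> R) t :
  (forall r, derivable_pt_lim (f r) t (f' r)) ->
  derivable_pt_lim (fun u => rsum (fun r => f r u)) t (rsum f').
Proof.
elim: k f f' => [|k IH] f f' H.
  have -> : (fun u => rsum (fun r : 'I_0 => f r u)) = fct_cte 0.
    by apply: functional_extensionality => u; rewrite /rsum big_ord0.
  rewrite /rsum big_ord0; exact: derivable_pt_lim_const.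
have -> : (fun u => rsum (fun r => f r u)) =
    plus_fct (fun u => rsum (fun r => f (widen_ord (leqnSn k) r) u)) (f ord_max).
  by apply: functional_extensionality => u; rewrite /rsum big_ord_recr.
rewrite /rsum big_ord_recr /= -/(rsum _).
apply: derivable_pt_lim_plus; last exact: H.
exact: (IH (fun r => f (widen_ord (leqnSn k) r)) (fun r => f' (widen_ord (leqnSn k) r))).
Qed.

Lemma dot_comm k (u v : Vec k) : dot u v = dot v u.
Proof. by apply: rsum_ext => i; rewrite Rmult_comm. Qed.

Lemma dot_scal_r k (g d : Vec k) h : dot g (fun i => h * d i) = h * dot g d.
Proof. by rewrite /dot -rsum_scal; apply: rsum_ext => i; ring. Qed.

Lemma dot_sub_r k (s a b : Vec k) : dot s (vsub a b) = dot s a - dot s b.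
Proof.
have -> : dot s (vsub a b) = rsum (fun i => s i * a i + (-1) * (s i * b i)).
  by apply: rsum_ext => i; rewrite /vsub; ring.
rewrite rsum_plus rsum_scal /dot; ring.
Qed.

Lemma dot_ge0 k (d : Vec k) : 0 <= dot d d.
Proof. rewrite -(rsum_zero k); apply: rsum_le => i; nra. Qed.

Lemma dot_zero_l k (d : Vec k) : dot (vzero k) d = 0.
Proof. by rewrite -(rsum_zero k); apply: rsum_ext => i; rewrite /vzero Rmult_0_l. Qed.

Lemma vnorm_scal k (d : Vec k) h : vnorm (fun i => h * d i) = Rabs h * vnorm d.
Proof.
rewrite /vnorm dot_scal_r dot_comm dot_scal_r -Rmult_assoc.
rewrite sqrt_mult; [|nra|exact: dot_ge0].
by rewrite -[h * h]/(Rsqr h) sqrt_Rsqr_abs.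
Qed.

Lemma line_deriv k (phi : Vec k -> R) (x0 d : Vec k) t g :
  has_grad_at phi (fun i => x0 i + t * d i) g ->
  derivable_pt_lim (fun u => phi (fun i => x0 i + u * d i)) t (dot g d).
Proof.
move=> Hg eps Heps.
set N := vnorm d.
have HN : 0 <= N by exact: sqrt_pos.
have Heps' : 0 < eps / (2 * (N + 1)) by apply: Rdiv_lt_0_compat; lra.
case: (Hg _ Heps') => dl [Hdl Hy].
have Hpos : 0 < dl / (N + 1) by apply: Rdiv_lt_0_compat; lra.
exists (mkposreal _ Hpos) => h hn0 /= hlt.
have Hstep : vsub (fun i => x0 i + (t + h) * d i) (fun i => x0 i + t * d i)
             = (fun i => h * d i).
  by apply: functional_extensionality => i; rewrite /vsub; ring.
have Hah : 0 < Rabs h by apply: Rabs_pos_lt.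
have Hclose : Rabs h * N < dl.
  have : Rabs h * (N + 1) < dl.
    apply: (Rmult_lt_reg_r (/ (N + 1))); first by apply: Rinv_0_lt_compat; lra.
    by rewrite Rmult_assoc Rinv_r ?Rmult_1_r; [exact: hlt | lra].
  nra.
have := Hy (fun i => x0 i + (t + h) * d i).
rewrite Hstep vnorm_scal dot_scal_r -/N => /(_ Hclose).
set D := phi _ - phi _ => Hb.
have -> : D / h - dot g d = (D - h * dot g d) / h by field.
rewrite /Rdiv Rabs_mult Rabs_inv.
apply: (Rmult_lt_reg_r (Rabs h)) => //.
rewrite Rmult_assoc Rinv_l ?Rmult_1_r; last lra.
apply: (Rle_lt_trans _ _ _ Hb).
have : eps / (2 * (N + 1)) * N < eps.
  apply: (Rmult_lt_reg_r (2 * (N + 1))); first lra.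
  have -> : eps / (2 * (N + 1)) * N * (2 * (N + 1)) = eps * N by field; lra.
  nra.
nra.
Qed.

Lemma chord_tangent (psi : R -> R) l :
  (forall u, 0 <= u <= 1 -> psi u <= (1 - u) * psi 0 + u * psi 1) ->
  derivable_pt_lim psi 0 l -> psi 0 + l <= psi 1.
Proof.
move=> Hchord Hd; apply: Rnot_lt_le => Hlt.
have Heps : 0 < l - (psi 1 - psi 0) by lra.
case: (Hd _ Heps) => del Hdel; have Hdp := cond_pos del.
set h := Rmin (del / 2) (1 / 2).
have Hh : 0 < h by apply: Rmin_pos; lra.
have Hh1 : h <= 1 / 2 by apply: Rmin_r.
have Hh2 : h <= del / 2 by apply: Rmin_l.
have := Hdel h ltac:(lra) ltac:(rewrite Rabs_right; lra).
rewrite Rplus_0_l.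
set q := (psi h - psi 0) / h => Habs.
have Hq : psi h - psi 0 = q * h by rewrite /q; field; lra.
have Hq_le : q <= psi 1 - psi 0.
  apply: (Rmult_le_reg_r h) => //; have := Hchord h ltac:(lra); nra.
have := Rle_abs (- (q - l)); rewrite Rabs_Ropp; lra.
Qed.

Lemma convex_grad_ineq k (E : Vec k -> Prop) V x0 x g :
  convex_on E V -> E x0 -> E x -> has_grad_at V x0 g ->
  V x0 + dot g (vsub x x0) <= V x.
Proof.
move=> Hc H0 H1 Hg.
set d := vsub x x0.
set psi := fun u => V (fun i => x0 i + u * d i).
have Hline : forall u, vcomb u x0 x = (fun i => x0 i + u * d i).
  by move=> u; apply: functional_extensionality => i; rewrite /vcomb /d /vsub; ring.
have Hp0 : psi 0 = V x0.
  by rewrite /psi; f_equal; apply: functional_extensionality => i; ring.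
have Hp1 : psi 1 = V x.
  by rewrite /psi; f_equal; apply: functional_extensionality => i; rewrite /d /vsub; ring.
rewrite -Hp0 -Hp1; apply: chord_tangent.
  by move=> u Hu; rewrite Hp0 Hp1 /psi -Hline; exact: (proj2 (Hc _ _ _ H0 H1 Hu)).
apply: line_deriv.
have -> : (fun i => x0 i + 0 * d i) = x0 by apply: functional_extensionality => i; ring.
exact: Hg.
Qed.

Lemma stationary_min_1d (psi chi : R -> R) q : 0 <= q ->
  (forall t, derivable_pt_lim psi t (chi t)) ->
  (forall t, derivable_pt_lim chi t q) -> chi 0 = 0 -> psi 0 <= psi 1.
Proof.
move=> Hq dpsi dchi Hchi0.
pose prc : derivable chi := fun t => exist _ q (dchi t).
pose prp : derivable psi := fun t => exist _ (chi t) (dpsi t).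
have Hinc : increasing chi by apply: (nonneg_derivative_1 chi prc).
case: (MVT_cor1 psi 0 1 prp ltac:(lra)) => cc [/= Heq Hcc].
have : 0 <= chi cc by rewrite -Hchi0; apply: Hinc; lra.
nra.
Qed.

Lemma second_line_deriv k (H : Mat k) (gr : Vec k -> Vec k) x0 d t :
  (forall x r, has_grad_at (fun y => gr y r) x (fun s => H r s)) ->
  derivable_pt_lim (fun u => dot (gr (fun i => x0 i + u * d i)) d) t (quadform H d).
Proof.
move=> Hgr2.
have -> : quadform H d = rsum (fun r => dot (fun s => H r s) d * d r).
  by apply: rsum_ext => r; rewrite /mxv /dot Rmult_comm.
change (derivable_pt_lim (fun u => rsum (fun r => gr (fun i => x0 i + u * d i) r * d r))
  t (rsum (fun r => dot (fun s => H r s) d * d r))).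
apply: rsum_deriv => r.
have := derivable_pt_lim_scal _ (d r) t _ (@line_deriv _ (fun z => gr z r) x0 d t _ (Hgr2 _ r)).
have -> : mult_real_fct (d r) (fun u => gr (fun i => x0 i + u * d i) r)
          = (fun u => gr (fun i => x0 i + u * d i) r * d r).
  by apply: functional_extensionality => u; rewrite /mult_real_fct Rmult_comm.
by rewrite Rmult_comm.
Qed.

Lemma posdef_stationary_global_min k (phi : Vec k -> R) (H : Mat k) x0 :
  is_hessian phi H -> posdef H -> has_grad_at phi x0 (vzero k) ->
  forall y, phi x0 <= phi y.
Proof.
move=> [gr [Hgr Hgr2]] Hpd Hst y.
set d := vsub y x0.
set ln := fun u => (fun i => x0 i + u * d i).
have Hl0 : ln 0 = x0 by apply: functional_extensionality => i; rewrite /ln; ring.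
have Hl1 : ln 1 = y by apply: functional_extensionality => i; rewrite /ln /d /vsub; ring.
have Hq : 0 <= quadform H d.
  case: (classic (d = vzero k)) => [->|Hne]; last by apply: Rlt_le; apply: Hpd.
  by rewrite /quadform dot_zero_l; lra.
have dpsi : forall t, derivable_pt_lim (fun u => phi (ln u)) t (dot (gr (ln t)) d).
  by move=> t; apply: line_deriv.
rewrite -{1}Hl0 -Hl1.
apply: (stationary_min_1d Hq dpsi).
  by move=> t; apply: second_line_deriv.
have Hd0 : derivable_pt_lim (fun u => phi (ln u)) 0 (dot (vzero k) d).
  by apply: line_deriv; rewrite -/(ln 0) Hl0.
rewrite dot_zero_l in Hd0.
exact: (uniqueness_limite _ 0 _ _ (dpsi 0) Hd0).
Qed.

Lemma fenchel_young n (q : probcomp n) : canonical_comp q -> convex_on (cE q) (cV q) ->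
  forall s xi, cEs q s -> cE q xi -> dot xi s - cVs q s <= cV q xi.
Proof.
move=> [_ [_ [_ [_ [Hgr [_ [Hinv [Hleg _]]]]]]]] Hcv s xi Hs Hxi.
case: (Hinv s Hs) => HE0 Hg0.
have Hg := Hgr _ HE0; rewrite Hg0 in Hg.
have := convex_grad_ineq Hcv HE0 Hxi Hg.
rewrite dot_sub_r (Hleg s Hs) (dot_comm xi s); lra.
Qed.

Lemma fenchel_young_eq n (q : probcomp n) : canonical_comp q ->
  forall s, cEs q s -> dot (cgVs q s) s - cVs q s = cV q (cgVs q s).
Proof.
move=> [_ [_ [_ [_ [_ [_ [_ [Hleg _]]]]]]]] s Hs.
rewrite (Hleg s Hs) dot_comm; ring.
Qed.

Lemma Lam_in_E n (q : probcomp n) : canonical_comp q -> forall x, cE q (cLam q x).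
Proof. by move=> [_ [_ [_ [H _]]]]. Qed.

Section CanonicalDuality.
Variables (n m p : nat) (F : probcomp n) (Gs : 'I_m -> probcomp n)
  (Hs : 'I_p -> probcomp n) (A : Mat n) (c : Vec n).
Hypotheses (hF : canonical_comp F) (hG : forall i, canonical_comp (Gs i))
  (hH : forall j, canonical_comp (Hs j))
  (cvF : convex_on (cE F) (cV F))
  (cvG : forall i, convex_on (cE (Gs i)) (cV (Gs i)))
  (cvH : forall j, convex_on (cE (Hs j)) (cV (Hs j))).

Lemma weak_duality (s : dual F Gs Hs) x :
  in_Sa_plus A c s -> feasible Gs Hs x -> Xi1 A c x s <= fobj F A c x.
Proof.
move=> [[Hlam [_ [HsF [HsG [HsH _]]]]] [_ Hmu]] [Hgx Hhx].
rewrite /Xi1 /fobj.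
have tF := fenchel_young hF cvF HsF (Lam_in_E hF x).
have tG : rsum (fun i => dlam s i *
            (dot (cLam (Gs i) x) (dsg s i) - cVs (Gs i) (dsg s i))) <= 0.
  rewrite -(rsum_zero m); apply: rsum_le => i.
  have := fenchel_young (hG i) (@cvG i) (HsG i) (Lam_in_E (hG i) x).
  have := Hgx i; rewrite /gcon; have := Hlam i; nra.
have tH : rsum (fun j => dmu s j *
            (dot (cLam (Hs j) x) (dsh s j) - cVs (Hs j) (dsh s j))) <= 0.
  rewrite -(rsum_zero p); apply: rsum_le => j.
  have := fenchel_young (hH j) (@cvH j) (HsH j) (Lam_in_E (hH j) x).
  have := Hhx j; rewrite /hcon; have := Hmu j; nra.
lra.
Qed.

Lemma Pd_is_min (s : dual F Gs Hs) :
  in_Sa_plus A c s -> forall x, stationary A c s x -> forall y,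
  Pd A c s = Xi1 A c x s /\ Pd A c s <= Xi1 A c y s.
Proof.
move=> [[_ [_ [_ [_ [_ Hex]]]]] [[H [Hhess Hpd]] _]] x Hx y.
have Hst : stationary A c s (stat_pt A c s) by rewrite /stat_pt; exact: epsilon_spec.
have minimal := posdef_stationary_global_min Hhess Hpd.
split; last exact: minimal.
by apply: Rle_antisym; [exact: minimal | exact: (minimal _ Hx)].
Qed.

(* At a critical pair, Fenchel-Young equalities and complementarity make the
   total complementarity function coincide with the objective. *)
Lemma Xi1_critical (xb : Vec n) (sb : dual F Gs Hs) :
  in_Sa A c sb ->
  cLam F xb = cgVs F (dsf sb) ->
  (forall i, cLam (Gs i) xb = cgVs (Gs i) (dsg sb i)) ->
  (forall j, cLam (Hs j) xb = cgVs (Hs j) (dsh sb j)) ->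
  (forall j, hcon Hs j xb = 0) ->
  rsum (fun i => dlam sb i * gcon Gs i xb) = 0 ->
  Xi1 A c xb sb = fobj F A c xb.
Proof.
move=> [_ [_ [HsF [HsG [HsH _]]]]] eqF eqG eqH hxb comp.
rewrite /Xi1 /fobj eqF (fenchel_young_eq hF HsF) -eqF.
have -> : rsum (fun i => dlam sb i *
            (dot (cLam (Gs i) xb) (dsg sb i) - cVs (Gs i) (dsg sb i))) = 0.
  by rewrite -comp; apply: rsum_ext => i; rewrite /gcon eqG fenchel_young_eq.
have -> : rsum (fun j => dmu sb j *
            (dot (cLam (Hs j) xb) (dsh sb j) - cVs (Hs j) (dsh sb j))) = 0.
  rewrite -(rsum_zero p); apply: rsum_ext => j.
  by move: (hxb j); rewrite /hcon eqH fenchel_young_eq // => ->; ring.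
ring.
Qed.

End CanonicalDuality.

Theorem theorem2 (n m p : nat) (F : probcomp n) (Gs : 'I_m -> probcomp n)
    (Hs : 'I_p -> probcomp n) (A : Mat n) (c : Vec n)
    (hF : canonical_comp F) (hG : forall i, canonical_comp (Gs i))
    (hH : forall j, canonical_comp (Hs j))
    (hA : mx_symmetric A)
    (cvF : convex_on (cE F) (cV F))
    (cvG : forall i, convex_on (cE (Gs i)) (cV (Gs i)))
    (cvH : forall j, convex_on (cE (Hs j)) (cV (Hs j)))
    (xb : Vec n) (sb : dual F Gs Hs)
    (h_i : stationary A c sb xb)
    (h_iif : cLam F xb = cgVs F (dsf sb))
    (h_iig : forall i, cLam (Gs i) xb = cgVs (Gs i) (dsg sb i))
    (h_iih : forall j, cLam (Hs j) xb = cgVs (Hs j) (dsh sb j))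
    (h_iii_h : forall j, hcon Hs j xb = 0)
    (h_iii_lam : forall i, 0 <= dlam sb i)
    (h_iii_g : forall i, gcon Gs i xb <= 0)
    (h_iii_comp : rsum (fun i => dlam sb i * gcon Gs i xb) = 0)
    (hsb : in_Sa_plus A c sb)
    (hconv : Sa_plus_convex F Gs Hs A c) :
  (forall s : dual F Gs Hs, in_Sa_plus A c s -> Pd A c s <= Pd A c sb) /\
  feasible Gs Hs xb /\
  (forall x, feasible Gs Hs x -> fobj F A c xb <= fobj F A c x) /\
  fobj F A c xb = Pd A c sb.
Proof.
have Hfeas : feasible Gs Hs xb by split.
have weak := weak_duality hF hG hH cvF cvG cvH.
have Hval : Pd A c sb = fobj F A c xb.
  rewrite (proj1 (Pd_is_min hsb h_i xb)).
  exact: (Xi1_critical hF hG hH (proj1 hsb)) h_iif h_iig h_iih h_iii_h h_iii_comp.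
split; [|split; [exact: Hfeas | split]]; last by rewrite Hval.
- move=> s Hs'; have [[_ [_ [_ [_ [_ [x Hx]]]]]] _] := Hs'.
  rewrite Hval; apply: Rle_trans (proj2 (Pd_is_min Hs' Hx xb)) _.
  exact: weak.
- move=> x Hx; rewrite -Hval; apply: Rle_trans (proj2 (Pd_is_min hsb h_i x)) _.
  exact: weak.
Qed.
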